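(* Let $(X,p)$ and $(Y,d)$ be complete separable metric spaces and let $F: X \Rightarrow Y$ be a multi-valued function whose graph is an analytic subset of $X \times Y$. Then the set of points of continuity of $F$ is an analytic subset of $X$.
   Context: A multi-valued function $F: X \Rightarrow Y$ assigns to each $x$ a nonempty set $F(x)\subseteq Y$; its graph is $\{(x,y): y\in F(x)\}$. $F$ is continuous at $x$ if there is some $y \in F(x)$ such that for every $\varepsilon>0$ there is $\delta>0$ such that for every $x' \in B_p(x,\delta)$ there is $y' \in F(x')$ with $d(y,y')<\varepsilon$. A subset of a complete separable metric space is analytic if it is a continuous image of a closed subset of a complete separable metric space. *)

From Stdlib Require Import Reals.
Open Scope R_scope.

Definition is_metric {X : Type} (d : X -> X -> R) : Prop :=
  (forall x y, 0 <= d x y) /\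
  (forall x y, d x y = 0 <-> x = y) /\
  (forall x y, d x y = d y x) /\
  (forall x y z, d x z <= d x y + d y z).

Definition cauchy_seq {X : Type} (d : X -> X -> R) (u : nat -> X) : Prop :=
  forall eps, 0 < eps -> exists N : nat,
    forall m n, (N <= m)%nat -> (N <= n)%nat -> d (u m) (u n) < eps.

Definition seq_converges_to {X : Type} (d : X -> X -> R) (u : nat -> X) (l : X) : Prop :=
  forall eps, 0 < eps -> exists N : nat, forall n, (N <= n)%nat -> d (u n) l < eps.

Definition complete_metric {X : Type} (d : X -> X -> R) : Prop :=
  forall u : nat -> X, cauchy_seq d u -> exists l, seq_converges_to d u l.

Definition separable_metric {X : Type} (d : X -> X -> R) : Prop :=
  exists D : X -> Prop,
    (exists f : X -> nat, forall x y, D x -> D y -> f x = f y -> x = y) /\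
    (forall x eps, 0 < eps -> exists y, D y /\ d x y < eps).

Definition polish_metric {X : Type} (d : X -> X -> R) : Prop :=
  is_metric d /\ complete_metric d /\ separable_metric d.

Definition closed_in {X : Type} (d : X -> X -> R) (C : X -> Prop) : Prop :=
  forall x, (forall eps, 0 < eps -> exists y, C y /\ d x y < eps) -> C x.

Definition continuous_on_set {Z X : Type} (dZ : Z -> Z -> R) (dX : X -> X -> R)
  (C : Z -> Prop) (f : Z -> X) : Prop :=
  forall z, C z -> forall eps, 0 < eps -> exists delta, 0 < delta /\
    forall z', C z' -> dZ z z' < delta -> dX (f z) (f z') < eps.

Definition analytic {X : Type} (dX : X -> X -> R) (A : X -> Prop) : Prop :=
  exists (Z : Type) (dZ : Z -> Z -> R) (C : Z -> Prop) (f : Z -> X),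
    polish_metric dZ /\ closed_in dZ C /\ continuous_on_set dZ dX C f /\
    (forall x, A x <-> exists z, C z /\ f z = x).

Definition prod_dist {X Y : Type} (p : X -> X -> R) (d : Y -> Y -> R)
  (a b : X * Y) : R := Rmax (p (fst a) (fst b)) (d (snd a) (snd b)).

(* multi-valued function F : X => Y is encoded as a relation: y \in F(x) iff F x y *)
Definition mv_nonempty {X Y : Type} (F : X -> Y -> Prop) : Prop :=
  forall x, exists y, F x y.

Definition mv_graph {X Y : Type} (F : X -> Y -> Prop) (a : X * Y) : Prop :=
  F (fst a) (snd a).

Definition mv_continuous_at {X Y : Type} (p : X -> X -> R) (d : Y -> Y -> R)
  (F : X -> Y -> Prop) (x : X) : Prop :=
  exists y, F x y /\
    forall eps, 0 < eps -> exists delta, 0 < delta /\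
      forall x', p x x' < delta -> exists y', F x' y' /\ d y y' < eps.

(* Fix a countable dense family (q_i) in Y. Then x is a point of continuity of F iff
   some y in F(x) satisfies: for every n there are i and m with d(y, q_i) <= 1/(n+1)
   and every x' in the ball B(x, 1/(m+1)) has a value within 2/(n+1) of q_i. For
   fixed n, i, m this condition is closed in X x Y, so the continuity points are the
   first projection of the analytic graph cut down by a countable intersection of
   countable unions of closed sets. Choosing the witnesses (i, m) by a point of the
   Baire space turns that set into a continuous image of a closed subset of
   Z x N^N, where Z parametrizes the graph. *)

From Stdlib Require Import Reals Lra Lia List Cantor Classical ClassicalEpsilon
  FunctionalExtensionality.
Open Scope R_scope.

Lemma Rinv_INR_S_pos (n : nat) : 0 < / INR (S n).
Proof. apply Rinv_0_lt_compat, lt_0_INR; lia. Qed.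

Lemma Rinv_INR_S_lt (e : R) : 0 < e -> exists n, / INR (S n) < e.
Proof.
  intros He. destruct (archimed_cor1 e He) as [[|n] [HN HN0]]; [lia|eauto].
Qed.

Lemma half_pow_pos (n : nat) : 0 < (1/2)^n.
Proof. apply pow_lt; lra. Qed.

Lemma half_pow_le (n m : nat) : (n <= m)%nat -> (1/2)^m <= (1/2)^n.
Proof.
  induction 1 as [|m _ IH]; [lra|].
  simpl. pose proof (half_pow_pos m). lra.
Qed.

Lemma half_pow_lt_S (n : nat) : (1/2)^(S n) < (1/2)^n.
Proof. simpl. pose proof (half_pow_pos n). lra. Qed.

Lemma half_pow_lt (eps : R) : 0 < eps -> exists K, (1/2)^K < eps.
Proof.
  intros H.
  destruct (pow_lt_1_zero (1/2) ltac:(rewrite Rabs_pos_eq; lra) eps H) as [N HN].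
  exists N. specialize (HN N (le_n _)).
  rewrite Rabs_pos_eq in HN; [exact HN|left; apply half_pow_pos].
Qed.

Definition baire_gaps (a b : nat -> nat) (r : R) : Prop :=
  r = 0 \/ exists n, a n <> b n /\ r = (1/2)^n.

Lemma baire_gaps_bound (a b : nat -> nat) : bound (baire_gaps a b).
Proof.
  exists 1. intros r [->|[n [_ ->]]]; [lra|].
  apply (half_pow_le 0 n); lia.
Qed.

(* The distance is [(1/2)^n] for the first index [n] where the sequences differ,
   obtained as a supremum to avoid computing that index. *)
Definition baire_dist (a b : nat -> nat) : R :=
  proj1_sig (completeness (baire_gaps a b) (baire_gaps_bound a b)
    (ex_intro _ 0 (or_introl eq_refl))).

Lemma baire_dist_lub (a b : nat -> nat) : is_lub (baire_gaps a b) (baire_dist a b).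
Proof. unfold baire_dist. destruct completeness; auto. Qed.

Lemma baire_dist_ge0 (a b : nat -> nat) : 0 <= baire_dist a b.
Proof. apply (baire_dist_lub a b). now left. Qed.

Lemma baire_dist_ge_neq (a b : nat -> nat) (n : nat) :
  a n <> b n -> (1/2)^n <= baire_dist a b.
Proof. intros Hn. apply (baire_dist_lub a b). right. eauto. Qed.

Lemma baire_dist_le (a b : nat -> nat) (r : R) :
  0 <= r -> (forall n, a n <> b n -> (1/2)^n <= r) -> baire_dist a b <= r.
Proof.
  intros H0 H. apply (baire_dist_lub a b).
  intros x [->|[n [Hn ->]]]; auto.
Qed.

Lemma baire_dist_le_agree (a b : nat -> nat) (N : nat) :
  (forall k, (k <= N)%nat -> a k = b k) -> baire_dist a b <= (1/2)^(S N).
Proof.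
  intros H. apply baire_dist_le; [left; apply half_pow_pos|].
  intros n Hn. destruct (Compare_dec.le_lt_dec n N) as [h|h].
  - exfalso; auto.
  - apply half_pow_le; lia.
Qed.

Lemma baire_dist_lt_agree (a b : nat -> nat) (N k : nat) :
  baire_dist a b < (1/2)^N -> (k <= N)%nat -> a k = b k.
Proof.
  intros H Hk. apply NNPP. intros Hn.
  pose proof (baire_dist_ge_neq _ _ _ Hn). pose proof (half_pow_le _ _ Hk). lra.
Qed.

Lemma baire_dist_metric : is_metric baire_dist.
Proof.
  split; [|split; [|split]].
  - apply baire_dist_ge0.
  - intros x y; split.
    + intros H. apply functional_extensionality. intros n. apply NNPP. intros Hn.
      pose proof (baire_dist_ge_neq _ _ _ Hn). pose proof (half_pow_pos n). lra.
    + intros ->. apply Rle_antisym; [|apply baire_dist_ge0].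
      apply baire_dist_le; [lra|]. intros n Hn; now exfalso.
  - intros x y.
    apply Rle_antisym; apply baire_dist_le; try apply baire_dist_ge0;
      intros n Hn; apply baire_dist_ge_neq; auto.
  - intros x y z.
    pose proof (baire_dist_ge0 x y); pose proof (baire_dist_ge0 y z).
    apply baire_dist_le; [lra|].
    intros n Hn. destruct (classic (x n = y n)) as [E|E].
    + assert (y n <> z n) by congruence.
      pose proof (baire_dist_ge_neq _ _ _ H1). lra.
    + pose proof (baire_dist_ge_neq _ _ _ E). lra.
Qed.

Lemma baire_dist_complete : complete_metric baire_dist.
Proof.
  intros u Hu.
  destruct (choice (fun k N => forall m n, (N <= m)%nat -> (N <= n)%nat ->
                      baire_dist (u m) (u n) < (1/2)^k))
    as [N HN].
  { intros k. apply Hu, half_pow_pos. }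
  (* the limit takes its k-th digit from the tail after [N k] *)
  exists (fun k => u (N k) k).
  intros eps Heps. destruct (half_pow_lt eps Heps) as [K HK].
  exists (N K). intros n Hn.
  eapply Rle_lt_trans; [apply baire_dist_le_agree with (N := K)|].
  - intros k Hk. set (M := Nat.max (N K) (N k)).
    transitivity (u M k).
    + apply (baire_dist_lt_agree _ _ K); auto. apply HN; unfold M; lia.
    + apply (baire_dist_lt_agree _ _ k); auto. apply HN; unfold M; lia.
  - pose proof (half_pow_lt_S K). lra.
Qed.

Fixpoint encode_list (l : list nat) : nat :=
  match l with
  | nil => 0%nat
  | x :: l' => S (Cantor.to_nat (x, encode_list l'))
  end.

Lemma encode_list_inj (l l' : list nat) : encode_list l = encode_list l' -> l = l'.
Proof.
  revert l'; induction l as [|x l IH]; intros [|y l'] H; cbn [encode_list] in H;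
    try lia; auto.
  apply eq_add_S, Cantor.to_nat_inj in H. injection H as -> H2.
  f_equal; auto.
Qed.

Definition pad_zero (l : list nat) : nat -> nat := fun n => nth n l 0%nat.

Lemma baire_dist_separable : separable_metric baire_dist.
Proof.
  exists (fun a => exists l, a = pad_zero l). split.
  - exists (fun a => match excluded_middle_informative (exists l, a = pad_zero l) with
             | left H => encode_list (proj1_sig (constructive_indefinite_description _ H))
             | right _ => 0%nat
             end).
    intros x y Hx Hy.
    destruct excluded_middle_informative as [H1|]; [|contradiction].
    destruct excluded_middle_informative as [H2|]; [|contradiction].
    destruct constructive_indefinite_description as [l1 E1].
    destruct constructive_indefinite_description as [l2 E2]. simpl.
    intros E. apply encode_list_inj in E. congruence.
  - intros x eps Heps. destruct (half_pow_lt eps Heps) as [K HK].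
    exists (pad_zero (map x (seq 0 (S K)))). split; [eexists; eauto|].
    eapply Rle_lt_trans; [apply baire_dist_le_agree with (N := K)|].
    + intros k Hk. unfold pad_zero.
      rewrite nth_indep with (d' := x 0%nat) by (rewrite length_map, length_seq; lia).
      rewrite map_nth, seq_nth by lia. reflexivity.
    + pose proof (half_pow_lt_S K). lra.
Qed.

Lemma baire_dist_polish : polish_metric baire_dist.
Proof.
  split; [apply baire_dist_metric|].
  split; [apply baire_dist_complete|apply baire_dist_separable].
Qed.

Section Product.

Variables (A B : Type) (dA : A -> A -> R) (dB : B -> B -> R).

Lemma prod_dist_metric : is_metric dA -> is_metric dB -> is_metric (prod_dist dA dB).
Proof.
  intros [A1 [A2 [A3 A4]]] [B1 [B2 [B3 B4]]]. unfold prod_dist.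
  split; [|split; [|split]].
  - intros a b. apply (Rle_trans _ _ _ (A1 (fst a) (fst b))), Rmax_l.
  - intros [x1 x2] [y1 y2]; simpl; split.
    + intros H. pose proof (A1 x1 y1). pose proof (B1 x2 y2).
      pose proof (Rmax_l (dA x1 y1) (dB x2 y2)). pose proof (Rmax_r (dA x1 y1) (dB x2 y2)).
      assert (E1 : dA x1 y1 = 0) by lra. assert (E2 : dB x2 y2 = 0) by lra.
      apply A2 in E1. apply B2 in E2. congruence.
    + intros E; injection E as -> ->.
      rewrite (proj2 (A2 y1 y1) eq_refl), (proj2 (B2 y2 y2) eq_refl).
      apply Rmax_left; lra.
  - intros a b. rewrite A3, B3; auto.
  - intros a b c. apply Rmax_lub.
    + eapply Rle_trans; [apply A4|]. apply Rplus_le_compat; apply Rmax_l.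
    + eapply Rle_trans; [apply B4|]. apply Rplus_le_compat; apply Rmax_r.
Qed.

Lemma prod_dist_complete :
  complete_metric dA -> complete_metric dB -> complete_metric (prod_dist dA dB).
Proof.
  intros HA HB u Hu. unfold prod_dist in *.
  destruct (HA (fun n => fst (u n))) as [l1 Hl1].
  { intros e He. destruct (Hu e He) as [N HN]. exists N. intros m n Hm Hn.
    eapply Rle_lt_trans; [apply Rmax_l|apply HN; auto]. }
  destruct (HB (fun n => snd (u n))) as [l2 Hl2].
  { intros e He. destruct (Hu e He) as [N HN]. exists N. intros m n Hm Hn.
    eapply Rle_lt_trans; [apply Rmax_r|apply HN; auto]. }
  exists (l1, l2). intros e He.
  destruct (Hl1 e He) as [N1 H1]. destruct (Hl2 e He) as [N2 H2].
  exists (Nat.max N1 N2). intros n Hn. apply Rmax_lub_lt; simpl.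
  - apply H1; lia.
  - apply H2; lia.
Qed.

Lemma prod_dist_separable :
  separable_metric dA -> separable_metric dB -> separable_metric (prod_dist dA dB).
Proof.
  intros [DA [[fA HfA] HDA]] [DB [[fB HfB] HDB]].
  exists (fun a => DA (fst a) /\ DB (snd a)). split.
  - exists (fun a => Cantor.to_nat (fA (fst a), fB (snd a))).
    intros [x1 x2] [y1 y2] [Hx1 Hx2] [Hy1 Hy2] E. cbn [fst snd] in *.
    apply Cantor.to_nat_inj in E. injection E as E1 E2.
    rewrite (HfA _ _ Hx1 Hy1 E1), (HfB _ _ Hx2 Hy2 E2). reflexivity.
  - intros [x1 x2] e He. destruct (HDA x1 e He) as [y1 [Hy1 Hd1]].
    destruct (HDB x2 e He) as [y2 [Hy2 Hd2]].
    exists (y1, y2); split; [auto|]. apply Rmax_lub_lt; auto.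
Qed.

Lemma prod_dist_polish :
  polish_metric dA -> polish_metric dB -> polish_metric (prod_dist dA dB).
Proof.
  intros [MA [CA SA]] [MB [CB SB]].
  split; [apply prod_dist_metric; auto|].
  split; [apply prod_dist_complete; auto|apply prod_dist_separable; auto].
Qed.

End Product.

Lemma closed_in_and {A : Type} (dA : A -> A -> R) (K L : A -> Prop) :
  closed_in dA K -> closed_in dA L -> closed_in dA (fun a => K a /\ L a).
Proof.
  intros HK HL a Ha. split.
  - apply HK. intros e He. destruct (Ha e He) as [b [[Kb _] Hb]]. eauto.
  - apply HL. intros e He. destruct (Ha e He) as [b [[_ Lb] Hb]]. eauto.
Qed.

Lemma closed_in_preimage_nonexpansive {A B : Type} (dA : A -> A -> R)
    (dB : B -> B -> R) (h : A -> B) (K : B -> Prop) :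
  (forall a a', dB (h a) (h a') <= dA a a') ->
  closed_in dB K -> closed_in dA (fun a => K (h a)).
Proof.
  intros Hh HK a Ha. apply HK. intros e He.
  destruct (Ha e He) as [a' [Ka' Hd]]. exists (h a'). split; [exact Ka'|].
  eapply Rle_lt_trans; [apply Hh|exact Hd].
Qed.

Lemma closed_in_preimage_on {A B : Type} (dA : A -> A -> R) (dB : B -> B -> R)
    (C : A -> Prop) (g : A -> B) (K : B -> Prop) :
  closed_in dA C -> continuous_on_set dA dB C g -> closed_in dB K ->
  closed_in dA (fun a => C a /\ K (g a)).
Proof.
  intros HC Hg HK a Ha.
  assert (Ca : C a).
  { apply HC. intros e He. destruct (Ha e He) as [a' [[Ca' _] Hd]]. eauto. }
  split; [exact Ca|]. apply HK. intros e He.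
  destruct (Hg a Ca e He) as [delta [Hdelta Hcont]].
  destruct (Ha delta Hdelta) as [a' [[Ca' Ka'] Hd]].
  exists (g a'). split; [exact Ka'|]. apply Hcont; assumption.
Qed.

Lemma closed_in_dist_le {A : Type} (dA : A -> A -> R) (q : A) (r : R) :
  is_metric dA -> closed_in dA (fun a => dA a q <= r).
Proof.
  intros [_ [_ [_ Htri]]] a Ha. apply Rle_plus_epsilon. intros e He.
  destruct (Ha e He) as [a' [Ha' Hd]]. pose proof (Htri a a' q). lra.
Qed.

Lemma closed_in_ball_subset {A : Type} (dA : A -> A -> R) (s : R) (P : A -> Prop) :
  is_metric dA -> closed_in dA (fun a => forall a', dA a a' < s -> P a').
Proof.
  intros [_ [_ [Hsym Htri]]] a Ha a' Hlt.
  destruct (Ha (s - dA a a') ltac:(lra)) as [b [Hb Hd]].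
  apply Hb. pose proof (Htri b a a'). rewrite Hsym in Hd. lra.
Qed.

Lemma analytic_image_Inter_Union {Z X : Type} (dZ : Z -> Z -> R) (dX : X -> X -> R)
    (C : Z -> Prop) (f : Z -> X) (K : nat -> nat -> Z -> Prop) (A : X -> Prop) :
  polish_metric dZ -> closed_in dZ C -> continuous_on_set dZ dX C f ->
  (forall n k, closed_in dZ (K n k)) ->
  (forall x, A x <-> exists z, C z /\ (forall n, exists k, K n k z) /\ f z = x) ->
  analytic dX A.
Proof.
  intros HZ HC Hf HK HA.
  (* a point [w] of the Baire space selects the witness [w n] for each [n] *)
  exists (Z * (nat -> nat))%type, (prod_dist dZ baire_dist),
    (fun a => C (fst a) /\ forall n, K n (snd a n) (fst a)), (fun a => f (fst a)).
  split; [apply prod_dist_polish; [exact HZ|exact baire_dist_polish]|].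
  split; [|split].
  - intros [z w] Hzw. cbn [fst snd]. unfold prod_dist in Hzw. cbn [fst snd] in Hzw.
    split.
    + apply HC. intros e He. destruct (Hzw e He) as [[z' w'] [[Cz' _] Hd]].
      exists z'. split; [exact Cz'|]. eapply Rle_lt_trans; [apply Rmax_l|exact Hd].
    + intros n. apply HK. intros e He.
      destruct (Hzw (Rmin e ((1/2)^n)) ltac:(apply Rmin_pos; auto; apply half_pow_pos))
        as [[z' w'] [[_ Kz'] Hd]].
      cbn [fst snd] in Kz', Hd.
      pose proof (Rmax_l (dZ z z') (baire_dist w w')).
      pose proof (Rmax_r (dZ z z') (baire_dist w w')).
      pose proof (Rmin_l e ((1/2)^n)). pose proof (Rmin_r e ((1/2)^n)).
      exists z'. split; [|lra].
      rewrite (baire_dist_lt_agree w w' n n); [exact (Kz' n)|lra|lia].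
  - intros [z w] [Cz _] e He. destruct (Hf z Cz e He) as [delta [Hdelta Hcont]].
    exists delta. split; [exact Hdelta|].
    intros [z' w'] [Cz' _] Hd. apply Hcont; [exact Cz'|].
    eapply Rle_lt_trans; [apply Rmax_l|exact Hd].
  - intros x. rewrite HA. split.
    + intros [z [Cz [HKz fz]]]. destruct (choice _ HKz) as [w Hw].
      exists (z, w). auto.
    + intros [[z w] [[Cz Hw] fz]]. exists z. eauto.
Qed.

Lemma separable_enumeration {Y : Type} (d : Y -> Y -> R) :
  separable_metric d ->
  exists q : nat -> option Y, forall y eps, 0 < eps ->
    exists i z, q i = Some z /\ d y z < eps.
Proof.
  intros [D [[code Hcode] Hdense]].
  exists (fun i => match excluded_middle_informative (exists z, D z /\ code z = i) with
           | left H => Some (proj1_sig (constructive_indefinite_description _ H))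
           | right _ => None
           end).
  intros y eps Heps. destruct (Hdense y eps Heps) as [z [Dz Hz]].
  exists (code z), z. split; [|exact Hz].
  destruct excluded_middle_informative as [H|H]; [|exfalso; eauto].
  destruct constructive_indefinite_description as [z' [Dz' Ez']]. simpl.
  f_equal. apply Hcode; assumption.
Qed.

Section ContinuityPoints.

Variables (X Y : Type) (p : X -> X -> R) (d : Y -> Y -> R) (F : X -> Y -> Prop)
  (q : nat -> option Y).

Hypothesis p_metric : is_metric p.
Hypothesis d_metric : is_metric d.
Hypothesis q_dense : forall y eps, 0 < eps -> exists i z, q i = Some z /\ d y z < eps.

Definition stable_near (n m : nat) (z : Y) (a : X * Y) : Prop :=
  d (snd a) z <= / INR (S n) /\
  forall x', p (fst a) x' < / INR (S m) -> exists y', F x' y' /\ d z y' < 2 * / INR (S n).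

(* [k] codes the pair [(i, m)] of an index into [q] and a radius exponent. *)
Definition stable_near_code (n k : nat) (a : X * Y) : Prop :=
  match q (fst (Cantor.of_nat k)) with
  | Some z => stable_near n (snd (Cantor.of_nat k)) z a
  | None => False
  end.

Lemma closed_in_stable_near_code (n k : nat) :
  closed_in (prod_dist p d) (stable_near_code n k).
Proof.
  unfold stable_near_code. destruct (q (fst (Cantor.of_nat k))) as [z|].
  - apply closed_in_and.
    + apply (closed_in_preimage_nonexpansive _ d snd (fun y => d y z <= _)).
      * intros a a'. apply Rmax_r.
      * apply closed_in_dist_le, d_metric.
    + apply (closed_in_preimage_nonexpansive _ p fst (fun x => forall x', p x x' < _ -> _)).
      * intros a a'. apply Rmax_l.
      * apply closed_in_ball_subset, p_metric.
  - intros a Ha. destruct (Ha 1 ltac:(lra)) as [b [[] _]].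
Qed.

Lemma mv_continuous_at_iff (x : X) :
  mv_continuous_at p d F x <->
  exists y, F x y /\ forall n, exists k, stable_near_code n k (x, y).
Proof.
  destruct d_metric as [_ [_ [Hsym Htri]]].
  unfold stable_near_code, stable_near. cbn [fst snd]. split.
  - intros [y [Fxy Hcont]]. exists y. split; [exact Fxy|]. intros n.
    destruct (Hcont _ (Rinv_INR_S_pos n)) as [delta [Hdelta Hball]].
    destruct (Rinv_INR_S_lt delta Hdelta) as [m Hm].
    destruct (q_dense y _ (Rinv_INR_S_pos n)) as [i [z [Hqi Hz]]].
    exists (Cantor.to_nat (i, m)). rewrite Cantor.cancel_of_to. cbn [fst snd]. rewrite Hqi.
    split; [lra|]. intros x' Hx'.
    destruct (Hball x' ltac:(lra)) as [y' [Fy' Hy']].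
    exists y'. split; [exact Fy'|]. pose proof (Htri z y y'). rewrite Hsym in Hz. lra.
  - intros [y [Fxy Hcodes]]. exists y. split; [exact Fxy|]. intros eps Heps.
    destruct (Rinv_INR_S_lt (eps / 3) ltac:(lra)) as [n Hn].
    destruct (Hcodes n) as [k Hk].
    destruct (q (fst (Cantor.of_nat k))) as [z|]; [|contradiction].
    destruct Hk as [Hyz Hball].
    exists (/ INR (S (snd (Cantor.of_nat k)))). split; [apply Rinv_INR_S_pos|].
    intros x' Hx'. destruct (Hball x' Hx') as [y' [Fy' Hy']].
    exists y'. split; [exact Fy'|]. pose proof (Htri y z y'). lra.
Qed.

End ContinuityPoints.

Theorem proposition2p8 (X Y : Type) (p : X -> X -> R) (d : Y -> Y -> R)
  (F : X -> Y -> Prop) :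
  polish_metric p -> polish_metric d -> mv_nonempty F ->
  analytic (prod_dist p d) (mv_graph F) ->
  analytic p (mv_continuous_at p d F).
Proof.
  intros [p_metric _] [d_metric [_ d_separable]] _ [Z [dZ [C [g [HZ [HC [Hg Hgraph]]]]]]].
  destruct (separable_enumeration d d_separable) as [q q_dense].
  apply (analytic_image_Inter_Union dZ p C (fun z => fst (g z))
           (fun n k z => C z /\ stable_near_code X Y p d F q n k (g z))); auto.
  - intros z Cz e He. destruct (Hg z Cz e He) as [delta [Hdelta Hcont]].
    exists delta. split; [exact Hdelta|]. intros z' Cz' Hz'.
    eapply Rle_lt_trans; [apply Rmax_l|apply Hcont; assumption].
  - intros n k. apply (closed_in_preimage_on _ (prod_dist p d)); auto.
    apply closed_in_stable_near_code; assumption.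
  - intros x. rewrite (mv_continuous_at_iff X Y p d F q) by assumption. split.
    + intros [y [Fxy Hcodes]].
      destruct (proj1 (Hgraph (x, y)) Fxy) as [z [Cz gz]].
      exists z. rewrite gz. split; [exact Cz|]. split; [|reflexivity].
      intros n. destruct (Hcodes n) as [k Hk]. eauto.
    + intros [z [Cz [Hcodes <-]]]. exists (snd (g z)). split.
      * apply (Hgraph (g z)). eauto.
      * intros n. destruct (Hcodes n) as [k [_ Hk]]. exists k.
        rewrite <- surjective_pairing. exact Hk.
Qed.
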